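(* Let $X\xrightarrow{f}Y\xrightarrow{g}Z$ be continuous maps between topological spaces, with $f$ surjective. If $f$ and $g\circ f$ are Serre fibrations, then $g$ is a Serre fibration.
   Context: A map $p\colon E\to B$ is a Serre fibration if for every $n\geq1$ and every commutative square with top map $[0,1]^{n-1}\times\{0\}\to E$, bottom map $[0,1]^n\to B$ and left map the inclusion, there is a map $[0,1]^n\to E$ making both triangles commute. *)

From HB Require Import structures.
From mathcomp Require Import all_boot all_order all_algebra.
From mathcomp Require Import all_classical all_reals all_analysis.
From mathcomp Require Import Rstruct Rstruct_topology.
Set Implicit Arguments. Unset Strict Implicit. Unset Printing Implicit Defensive.
Import Order.TTheory GRing.Theory Num.Theory.
Local Open Scope classical_set_scope.
Local Open Scope ring_scope.

Definition cube (m : nat) : set 'rV[Rdefinitions.R]_m :=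
  [set x | forall i, 0 <= x ord0 i <= 1].
Arguments cube : clear implicits.

Definition bottom_face (k : nat) : set 'rV[Rdefinitions.R]_k.+1 :=
  [set x | cube k.+1 x /\ x ord0 ord_max = 0].
Arguments bottom_face : clear implicits.

(* Maps out of a subspace A of the ambient space are represented by functions
   on the ambient space that are continuous within A; only their values on A
   matter. *)
Definition serre_fibration (E B : topologicalType) (p : E -> B) : Prop :=
  forall (k : nat) (top : 'rV[Rdefinitions.R]_k.+1 -> E)
         (bot : 'rV[Rdefinitions.R]_k.+1 -> B),
    {within bottom_face k, continuous top} ->
    {within cube k.+1, continuous bot} ->
    (forall x, bottom_face k x -> p (top x) = bot x) ->
    exists L : 'rV[Rdefinitions.R]_k.+1 -> E,
      [/\ {within cube k.+1, continuous L},
          (forall x, bottom_face k x -> L x = top x) &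
          (forall x, cube k.+1 x -> p (L x) = bot x)].

(* Given a square for g with top map t : [0,1]^(n-1) -> Y, first lift t
   through f: the contraction of the face [0,1]^(n-1) to a point, run with the
   last coordinate as time, is a homotopy from a constant map (which lifts,
   f being surjective) to t, so the lifting property of f lifts t. The lifted
   square is then a square for g o f, whose solution L gives f o L for g. *)

From mathcomp Require Import all_boot all_classical all_analysis.
From mathcomp Require Import all_order all_algebra all_reals Rstruct Rstruct_topology.
Import Order.TTheory GRing.Theory Num.Theory.
Local Open Scope classical_set_scope.
Local Open Scope ring_scope.

Notation vec k := 'rV[Rdefinitions.R]_k.

Lemma continuous_mx (T : topologicalType) (K : puniformType) m n
    (F : T -> 'M[K]_(m, n)) :
  (forall i j, continuous (fun x => F x i j)) -> continuous F.
Proof.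
move=> cF x; apply/cvg_mx_entourageP => A entA.
apply: filter_forall => i; apply: filter_forall => j.
have : \forall y \near x, xsection A (F x i j) (F y i j).
  exact: cF (nbhs_entourage (F x i j) entA).
by apply: filterS => y /xsectionP; rewrite /preimage /= inE.
Qed.

Lemma continuous_within_comp (T U V : topologicalType) (A : set T) (B : set U)
    (s : T -> U) (h : U -> V) :
  continuous s -> (forall x, A x -> B (s x)) ->
  {within B, continuous h} -> {within A, continuous (h \o s)}.
Proof.
move=> cs sAB /subspace_continuousP ch; apply/subspace_continuousP => x Ax.
apply: cvg_trans (ch _ (sAB _ Ax)) => W /(cs x) sW.
have {}sW : \forall z \near x, B (s z) -> W (h (s z)) := sW.
by apply: filterS sW => z hz Az; exact: hz (sAB _ Az).
Qed.

Section FaceContraction.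
Variable k : nat.

Definition raise_face (y : vec k.+1) : vec k.+1 :=
  \row_i (if i == ord_max then 1 else y ord0 i).

Definition contract_face (z : vec k.+1) : vec k.+1 :=
  \row_i (if i == ord_max then 0 else z ord0 ord_max * z ord0 i).

Lemma raise_face_continuous : continuous raise_face.
Proof.
apply: continuous_mx => i j; rewrite /raise_face.
under eq_fun do rewrite mxE.
by case: (j == ord_max); [exact: cst_continuous | exact: coord_continuous].
Qed.

Lemma contract_face_continuous : continuous contract_face.
Proof.
apply: continuous_mx => i j; rewrite /contract_face.
under eq_fun do rewrite mxE.
case: (j == ord_max); first exact: cst_continuous.
by move=> x; apply: continuousM; exact: coord_continuous.
Qed.

Lemma raise_face_cube y : bottom_face k y -> cube k.+1 (raise_face y).
Proof. by move=> [cy _] i; rewrite mxE; case: ifP; rewrite ?ler01 ?lexx. Qed.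

Lemma contract_face_bottom z : cube k.+1 z -> bottom_face k (contract_face z).
Proof.
move=> cz; split=> [i|]; last by rewrite mxE eqxx.
rewrite mxE; case: ifP => _; first by rewrite lexx ler01.
have /andP[t0 t1] := cz ord_max; have /andP[z0 z1] := cz i.
by rewrite mulr_ge0 ?mulr_ile1.
Qed.

Lemma contract_raise_face y : bottom_face k y -> contract_face (raise_face y) = y.
Proof.
move=> [_ y0]; apply/rowP => i; rewrite !mxE eqxx.
by case: eqP => [->|_]; rewrite ?y0 ?mul1r.
Qed.

Lemma contract_face_on_bottom y : bottom_face k y -> contract_face y = 0.
Proof. by move=> [_ y0]; apply/rowP => i; rewrite !mxE y0 mul0r; case: ifP. Qed.

End FaceContraction.

Arguments raise_face {k}.
Arguments contract_face {k}.

Lemma serre_fibration_lift_face {E B : topologicalType} {p : E -> B} {k}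
    {t : vec k.+1 -> B} {e0 : E} :
  serre_fibration p -> {within bottom_face k, continuous t} -> p e0 = t 0 ->
  exists2 T : vec k.+1 -> E, {within bottom_face k, continuous T} &
    forall y, bottom_face k y -> p (T y) = t y.
Proof.
move=> sp ct pe0.
have ctc : {within cube k.+1, continuous (t \o contract_face)}.
  exact: continuous_within_comp (@contract_face_continuous k)
    (@contract_face_bottom k) ct.
have ce0 : {within bottom_face k, continuous (fun=> e0)}.
  exact/continuous_subspaceT/cst_continuous.
have [|H [cH _ pH]] := sp k (fun=> e0) _ ce0 ctc.
  by move=> y /contract_face_on_bottom /= ->.
exists (H \o raise_face).
  exact: continuous_within_comp (@raise_face_continuous k)
    (@raise_face_cube k) cH.
by move=> y fy; rewrite /= pH /= ?contract_raise_face //; exact: raise_face_cube.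
Qed.

Theorem propositionA1 (X Y Z : topologicalType) (f : X -> Y) (g : Y -> Z) :
  continuous f -> continuous g ->
  (forall y : Y, exists x : X, f x = y) ->
  serre_fibration f -> serre_fibration (g \o f) ->
  serre_fibration g.
Proof.
move=> cf _ fsurj sf sgf k top bot ctop cbot gtop.
have [x0 fx0] := fsurj (top 0).
have [T cT fT] := serre_fibration_lift_face sf ctop fx0.
have [|L [cL LT gfL]] := sgf k T bot cT cbot.
  by move=> y fy; rewrite /= fT ?gtop.
exists (f \o L); split=> [|y fy|//].
  exact: within_continuous_comp.
by rewrite /= LT ?fT.
Qed.
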